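(* Let $\mathfrak g=\mathfrak r_3$ (basis $\{e_1,e_2,e_3\}$, nonzero brackets $[e_1,e_2]=e_2+e_3$, $[e_1,e_3]=e_3$). Then the action of $\mathbb R^\times\mathrm{Aut}(\mathfrak g)$ on $\mathrm{GL}_3(\mathbb R)/\mathrm{O}(3)$ has no minimal orbits (with respect to the natural Riemannian metric).
   Context: Identify $\mathfrak g\cong\mathbb R^3$ via the basis. $\mathrm{GL}_3(\mathbb R)/\mathrm{O}(3)$ is identified with the set of inner products on $\mathfrak g$ via $g.\langle\cdot,\cdot\rangle=\langle g^{-1}\cdot,g^{-1}\cdot\rangle$. The natural Riemannian metric is the $\mathrm{GL}_3(\mathbb R)$-invariant metric corresponding to $\langle X,Y\rangle=\mathrm{tr}(XY)$ on $\mathrm{sym}(3)$ (reductive complement $\mathfrak{gl}_3=\mathfrak o(3)\oplus\mathrm{sym}(3)$). $\mathbb R^\times\mathrm{Aut}(\mathfrak g)=\{c\varphi:c\ne0,\ \varphi\in\mathrm{Aut}(\mathfrak g)\}\subset\mathrm{GL}_3(\mathbb R)$ acts by restriction. An orbit is minimal if its mean curvature vector vanishes identically. *)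

From HB Require Import structures.
From mathcomp Require Import all_boot all_order all_algebra.
From mathcomp Require Import all_classical all_reals all_analysis.
Set Implicit Arguments. Unset Strict Implicit. Unset Printing Implicit Defensive.
Import Order.TTheory GRing.Theory Num.Theory.
Import numFieldNormedType.Exports.
Local Open Scope classical_set_scope.
Local Open Scope ring_scope.

Section R3.
Variable R : realType.

(* g = r_3 identified with R^3 (column vectors) via the basis e_1,e_2,e_3
   (indices 0,1,2).  Bracket by bilinearity from
   [e1,e2] = e2 + e3, [e1,e3] = e3, [e2,e3] = 0. *)
Definition r3_bracket (x y : 'cV[R]_3) : 'cV[R]_3 :=
  let a := x 0 0 * y 1 0 - x 1 0 * y 0 0 in      (* coefficient of [e1,e2] *)
  let b := x 0 0 * y (inord 2) 0 - x (inord 2) 0 * y 0 0 in  (* coefficient of [e1,e3] *)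
  \col_(i < 3) (if i == 0 :> nat then 0 else if i == 1 :> nat then a else a + b).

Definition is_aut (phi : 'M[R]_3) : Prop :=
  phi \in unitmx /\ forall x y, phi *m r3_bracket x y = r3_bracket (phi *m x) (phi *m y).

Definition RxAut : set 'M[R]_3 :=
  [set g | exists c : R, exists phi, c != 0 /\ is_aut phi /\ g = c *: phi].

(* GL_3(R)/O(3) = inner products on R^3, represented by their Gram matrices
   S (<x,y> = x^T S y): symmetric positive definite matrices. *)
Definition posdef (S : 'M[R]_3) : Prop :=
  S^T = S /\ forall x : 'cV[R]_3, x != 0 -> 0 < (x^T *m S *m x) 0 0.

(* g.<.,.> = <g^-1 ., g^-1 .> *)
Definition act (g S : 'M[R]_3) : 'M[R]_3 := (invmx g)^T *m S *m invmx g.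

(* The GL_3-invariant metric on the tangent space Sym(3) at S corresponding
   to tr(XY) on sym(3) at the base point (the standard inner product, S = 1):
   <A,B>_S = 1/4 tr(S^-1 A S^-1 B). *)
Definition metric (S A B : 'M[R]_3) : R :=
  4%:R^-1 * \tr (invmx S *m A *m invmx S *m B).

(* Levi-Civita covariant derivative along a curve c of its velocity c',
   at time t: D_t c' = c'' - c' c^-1 c' (Christoffel symbols of the above
   metric on the open set of positive definite matrices in Sym(3)). *)
Definition cov_accel (c : R -> 'M[R]_3) (t : R) : 'M[R]_3 :=
  derive1 (derive1 c) t - derive1 c t *m invmx (c t) *m derive1 c t.

Definition adm_curve (gam : R -> 'M[R]_3) : Prop :=
  (forall t, gam t \in RxAut) /\ gam 0 = 1 /\
  (forall t, derivable gam t 1) /\ (forall t, derivable (derive1 gam) t 1).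

Definition ocurve (gam : R -> 'M[R]_3) (Q : 'M[R]_3) : R -> 'M[R]_3 :=
  fun t => act (gam t) Q.

Definition tangent_space (Q : 'M[R]_3) : set 'M[R]_3 :=
  [set v | exists gam, adm_curve gam /\ v = derive1 (ocurve gam Q) 0].

Definition orbit (S : 'M[R]_3) : set 'M[R]_3 := [set act g S | g in RxAut].

Definition onb_curves (Q : 'M[R]_3) (k : nat) (gam : 'I_k -> R -> 'M[R]_3) :=
  (forall i, adm_curve (gam i)) /\
  (forall i j, metric Q (derive1 (ocurve (gam i) Q) 0)
                        (derive1 (ocurve (gam j) Q) 0) = (i == j)%:R) /\
  (forall v, tangent_space Q v ->
     exists a : 'I_k -> R, v = \sum_(i < k) a i *: derive1 (ocurve (gam i) Q) 0).

(* Mean curvature vector of the orbit at Q, computed from such a family: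
   sum_i II(v_i, v_i), with II(v,v) the normal component of the covariant
   acceleration of a curve in the orbit with velocity v. *)
Definition mean_curv (Q : 'M[R]_3) (k : nat) (gam : 'I_k -> R -> 'M[R]_3) :=
  let v i := derive1 (ocurve (gam i) Q) 0 in
  let w := \sum_(i < k) cov_accel (ocurve (gam i) Q) 0 in
  w - \sum_(i < k) metric Q w (v i) *: v i.

Definition minimal_orbit (S : 'M[R]_3) : Prop :=
  forall Q, orbit S Q ->
  forall k (gam : 'I_k -> R -> 'M[R]_3), onb_curves Q gam -> mean_curv Q gam = 0.

End R3.

From Pilot Require Import Defs.
From HB Require Import structures.
From mathcomp Require Import all_boot all_order all_algebra.
From mathcomp Require Import all_classical all_reals all_analysis.
From mathcomp Require Import ring lra.
Set Implicit Arguments. Unset Strict Implicit. Unset Printing Implicit Defensive.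
Import Order.TTheory GRing.Theory Num.Theory.
Import numFieldNormedType.Exports.
Local Open Scope ring_scope.

(* Every element of H = R^x Aut(r_3) is a lower triangular matrix
   [[a,0,0],[p,b,0],[q,r,b]] with a, b nonzero, and all such matrices lie in H.
   A Gram-Schmidt step inside H moves any inner product to Q = diag(1, 1, lam)
   with lam > 0, so it suffices to see that the orbit is not minimal at Q.
   Since the last two diagonal entries of an element of H agree, every tangent
   vector X of the orbit at Q satisfies X_33 = lam X_22, so the linear form
   X |-> X_33 - lam X_22 vanishes on the tangent part of any vector.  Scalings of
   e_1 and of {e_2, e_3} and the three shears give five curves in H whose
   velocities at Q are orthonormal; on the sum of their covariant accelerations
   the form takes the value -4 lam <> 0, hence the mean curvature at Q is not 0. *)

Notation o0 := (@Ordinal 3 0 isT).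
Notation o1 := (@Ordinal 3 1 isT).
Notation o2 := (@Ordinal 3 2 isT).
Ltac case_ord3 i := let H := fresh in case: i => [[|[|[|?]]] H]; last by exfalso; move: H.

Section Matrix3.
Variable R : comUnitRingType.

Definition mx3 (a b c d e f g h k : R) : 'M[R]_3 :=
  \matrix_(i < 3, j < 3)
   nth 0 (nth [::] [:: [:: a; b; c]; [:: d; e; f]; [:: g; h; k]] i) j.
Definition col3 (a b c : R) : 'cV[R]_3 := \col_(i < 3) nth 0 [:: a; b; c] i.

Lemma ord3_0 : (0 : 'I_3) = o0. Proof. exact: val_inj. Qed.
Lemma ord3_1 : (1 : 'I_3) = o1. Proof. exact: val_inj. Qed.
Lemma ord3_2 : (inord 2 : 'I_3) = o2. Proof. by apply: val_inj; rewrite /= inordK. Qed.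
Lemma ord1_0 (j : 'I_1) : j = 0. Proof. by apply: val_inj; case: j => [[|]]. Qed.

Lemma mx3_eta (M : 'M[R]_3) :
  M = mx3 (M o0 o0) (M o0 o1) (M o0 o2) (M o1 o0) (M o1 o1) (M o1 o2)
          (M o2 o0) (M o2 o1) (M o2 o2).
Proof.
apply/matrixP => i j; rewrite mxE.
by case_ord3 i; case_ord3 j; congr (M _ _); apply: val_inj.
Qed.

Lemma col3_eta (x : 'cV[R]_3) : x = col3 (x o0 0) (x o1 0) (x o2 0).
Proof.
apply/matrixP => i j; rewrite mxE (ord1_0 j).
by case_ord3 i; congr (x _ _); apply: val_inj.
Qed.

Lemma mul_mx3 a b c d e f g h k a' b' c' d' e' f' g' h' k' :
  mx3 a b c d e f g h k *m mx3 a' b' c' d' e' f' g' h' k' =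
  mx3 (a*a' + b*d' + c*g') (a*b' + b*e' + c*h') (a*c' + b*f' + c*k')
      (d*a' + e*d' + f*g') (d*b' + e*e' + f*h') (d*c' + e*f' + f*k')
      (g*a' + h*d' + k*g') (g*b' + h*e' + k*h') (g*c' + h*f' + k*k').
Proof.
apply/matrixP => i j; rewrite !mxE !big_ord_recr big_ord0 /= !mxE add0r.
by case_ord3 i; case_ord3 j.
Qed.

Lemma mul_mx3_col3 a b c d e f g h k x y z :
  mx3 a b c d e f g h k *m col3 x y z =
  col3 (a*x + b*y + c*z) (d*x + e*y + f*z) (g*x + h*y + k*z).
Proof.
apply/matrixP => i j; rewrite !mxE !big_ord_recr big_ord0 /= !mxE add0r.
by case_ord3 i.
Qed.

Lemma trmx_mx3 a b c d e f g h k :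
  (mx3 a b c d e f g h k)^T = mx3 a d g b e h c f k.
Proof. by apply/matrixP => i j; rewrite !mxE; case_ord3 i; case_ord3 j. Qed.

Lemma mxtrace_mx3 a b c d e f g h k : \tr (mx3 a b c d e f g h k) = a + e + k.
Proof. by rewrite /mxtrace !big_ord_recr big_ord0 /= !mxE add0r. Qed.

Lemma quad_mx3 a b c d e f g h k x y z :
  ((col3 x y z)^T *m mx3 a b c d e f g h k *m col3 x y z) 0 0 =
  x * (a*x + b*y + c*z) + y * (d*x + e*y + f*z) + z * (g*x + h*y + k*z).
Proof.
by rewrite -mulmxA mul_mx3_col3 !mxE !big_ord_recr big_ord0 /= !mxE add0r.
Qed.

Lemma add_mx3 a b c d e f g h k a' b' c' d' e' f' g' h' k' :
  mx3 a b c d e f g h k + mx3 a' b' c' d' e' f' g' h' k' =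
  mx3 (a+a') (b+b') (c+c') (d+d') (e+e') (f+f') (g+g') (h+h') (k+k').
Proof. by apply/matrixP => i j; rewrite !mxE; case_ord3 i; case_ord3 j. Qed.

Lemma opp_mx3 a b c d e f g h k :
  - mx3 a b c d e f g h k = mx3 (-a) (-b) (-c) (-d) (-e) (-f) (-g) (-h) (-k).
Proof. by apply/matrixP => i j; rewrite !mxE; case_ord3 i; case_ord3 j. Qed.

Lemma scale_mx3 r a b c d e f g h k :
  r *: mx3 a b c d e f g h k =
  mx3 (r*a) (r*b) (r*c) (r*d) (r*e) (r*f) (r*g) (r*h) (r*k).
Proof. by apply/matrixP => i j; rewrite !mxE; case_ord3 i; case_ord3 j. Qed.

Lemma mx3_1 : (1%:M : 'M[R]_3) = mx3 1 0 0 0 1 0 0 0 1.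
Proof. by apply/matrixP => i j; rewrite !mxE; case_ord3 i; case_ord3 j. Qed.

Lemma col3_0 : (0 : 'cV[R]_3) = col3 0 0 0.
Proof. by apply/matrixP => i j; rewrite !mxE; case_ord3 i. Qed.

Lemma col3_inj a b c a' b' c' :
  col3 a b c = col3 a' b' c' -> [/\ a = a', b = b' & c = c'].
Proof.
move=> E; have coord i := congr1 (fun v : 'cV[R]_3 => v i 0) E.
by split; [have := coord o0 | have := coord o1 | have := coord o2]; rewrite !mxE.
Qed.

Lemma col3_neq0 a b c : [|| a != 0, b != 0 | c != 0] -> col3 a b c != 0.
Proof.
by apply: contraTneq; rewrite col3_0 => /col3_inj [-> -> ->]; rewrite eqxx.
Qed.

Lemma mulmx1_invmx n (A B : 'M[R]_n) : A *m B = 1%:M -> invmx A = B.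
Proof.
move=> AB; have [uA _] := mulmx1_unit AB.
by rewrite -[invmx A]mulmx1 -AB mulmxA mulVmx // mul1mx.
Qed.

End Matrix3.

Section Group.
Variable R : realType.

Definition lowtri (a p b q r : R) : 'M[R]_3 := mx3 a 0 0 p b 0 q r b.

Definition lowtri_inv (a p b q r : R) : 'M[R]_3 :=
  lowtri a^-1 (- p / (a * b)) b^-1 ((p * r - b * q) / (a * b ^+ 2)) (- r / b ^+ 2).

Lemma mul_lowtri_inv a p b q r : a != 0 -> b != 0 ->
  lowtri a p b q r *m lowtri_inv a p b q r = 1%:M.
Proof.
move=> a_ne0 b_ne0; rewrite /lowtri_inv /lowtri mul_mx3 mx3_1.
by congr mx3; field; rewrite ?a_ne0 ?b_ne0.
Qed.

Lemma invmx_lowtri a p b q r : a != 0 -> b != 0 ->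
  invmx (lowtri a p b q r) = lowtri_inv a p b q r.
Proof. by move=> a_ne0 b_ne0; apply/mulmx1_invmx/mul_lowtri_inv. Qed.

Lemma r3_bracket_col3 (a b c d e f : R) :
  r3_bracket (col3 a b c) (col3 d e f) =
  col3 0 (a*e - b*d) (a*e - b*d + (a*f - c*d)).
Proof.
rewrite /r3_bracket ord3_0 ord3_1 ord3_2; apply/matrixP => i j; rewrite !mxE.
by case_ord3 i.
Qed.

Lemma RxAut_lowtri a p b q r : a != 0 -> b != 0 -> RxAut (lowtri a p b q r).
Proof.
move=> a_ne0 b_ne0.
have ba_ne0 : b / a != 0 by rewrite mulf_neq0 ?invr_eq0.
exists a, (lowtri 1 (p / a) (b / a) (q / a) (r / a)); split=> //; split; last first.
  by rewrite /lowtri scale_mx3; congr mx3; field.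
split.
  by have [] := mulmx1_unit (mul_lowtri_inv (p / a) (q / a) (r / a) (oner_neq0 R) ba_ne0).
move=> x y; rewrite (col3_eta x) (col3_eta y) /lowtri !mul_mx3_col3.
by rewrite !r3_bracket_col3 mul_mx3_col3; congr col3; ring.
Qed.

Lemma RxAut_lowtri_inv a p b q r : a != 0 -> b != 0 -> RxAut (lowtri_inv a p b q r).
Proof. by move=> a_ne0 b_ne0; apply: RxAut_lowtri; rewrite invr_eq0. Qed.

Lemma is_aut_mx3 (a0 b0 c0 a1 b1 c1 a2 b2 c2 : R) :
  is_aut (mx3 a0 b0 c0 a1 b1 c1 a2 b2 c2) ->
  [/\ a0 = 1, b0 = 0, c0 = 0, c1 = 0 & c2 = b1] /\ b1 != 0.
Proof.
set phi := mx3 _ _ _ _ _ _ _ _ _ => -[phi_unit phi_hom].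
have phi_e3 : phi *m col3 0 0 1 = col3 c0 c1 c2.
  by rewrite mul_mx3_col3; congr col3; ring.
have e3_ne0 : col3 c0 c1 c2 != 0.
  apply: contraNneq (@col3_neq0 R 0 0 1 _) => [e3_0|]; last by rewrite oner_eq0 !orbT.
  by rewrite -(mulKmx phi_unit (col3 0 0 1)) phi_e3 e3_0 mulmx0 eqxx.
have := phi_hom (col3 1 0 0) (col3 0 1 0); have := phi_hom (col3 1 0 0) (col3 0 0 1).
rewrite !r3_bracket_col3 !mul_mx3_col3 !r3_bracket_col3.
move=> /col3_inj[] e13_0 e13_1 e13_2 /col3_inj[] e12_0 e12_1 e12_2.
rewrite !(oppr0, mulr0, mul0r, mulr1, mul1r, addr0, add0r, subr0, subrr)
  in e13_0 e13_1 e13_2 e12_0 e12_1 e12_2.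
have b0_0 : b0 = 0 by lra.
rewrite e13_0 b0_0 !(mulr0, subr0, addr0) in e13_1 e13_2 e12_2 e3_ne0 *.
have a0_1 : a0 = 1.
  apply/eqP; apply: contraNT e3_ne0 => a0_ne1.
  have a0B_ne0 : 1 - a0 != 0 by rewrite subr_eq0 eq_sym.
  have /eqP : (1 - a0) * c1 = 0 by rewrite mulrBl mul1r -e13_1 subrr.
  rewrite mulf_eq0 (negbTE a0B_ne0) => /eqP c1_0.
  have /eqP : (1 - a0) * c2 = 0.
    by rewrite mulrBl mul1r {1}e13_2 c1_0 mulr0 add0r subrr.
  rewrite mulf_eq0 (negbTE a0B_ne0) => /eqP c2_0.
  by rewrite c1_0 c2_0 col3_0.
rewrite a0_1 !mul1r in e13_2 e12_2.
have c1_0 : c1 = 0 by lra.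
have c2_b1 : c2 = b1 by lra.
split=> //; apply: contraNneq e3_ne0 => b1_0.
by rewrite c1_0 c2_b1 b1_0 col3_0.
Qed.

Lemma RxAutP g : RxAut g ->
  [/\ g o0 o0 != 0, g o1 o1 != 0 &
      g = lowtri (g o0 o0) (g o1 o0) (g o1 o1) (g o2 o0) (g o2 o1)].
Proof.
move=> [c [phi [c_ne0 [phi_aut ->]]]].
move: phi_aut; rewrite (mx3_eta phi) => /is_aut_mx3[[-> -> -> -> ->] b1_ne0].
rewrite scale_mx3 /lowtri !mxE /= mulr1 mulf_neq0 //; split=> //.
by congr mx3; rewrite mulr0.
Qed.

End Group.

Section NormalForm.
Variable R : realType.

Definition Qdiag (lam : R) : 'M[R]_3 := mx3 1 0 0 0 1 0 0 0 lam.

Lemma lowtri_congr_diag (s00 s01 s02 s11 s12 s22 : R) :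
  let S := mx3 s00 s01 s02 s01 s11 s12 s02 s12 s22 in
  (forall x : 'cV[R]_3, x != 0 -> 0 < (x^T *m S *m x) 0 0) ->
  exists p q r d0 d1 d2 : R, [/\ 0 < d0, 0 < d1, 0 < d2 &
    (lowtri 1 p 1 q r)^T *m S *m lowtri 1 p 1 q r = mx3 d0 0 0 0 d1 0 0 0 d2].
Proof.
move=> S S_pd.
have S_pos x y z : [|| x != 0, y != 0 | z != 0] ->
    0 < ((col3 x y z)^T *m S *m col3 x y z) 0 0.
  by move=> xyz_ne0; apply/S_pd/col3_neq0.
have s22_gt0 : 0 < s22.
  have := S_pos 0 0 1; rewrite quad_mx3 oner_eq0 !orbT; lra.
pose r := - s12 / s22.
pose d1 := s11 - s12 ^+ 2 / s22.
have d1_gt0 : 0 < d1.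
  have := S_pos 0 1 r; rewrite quad_mx3 oner_eq0 orbT /= => /(_ isT).
  by congr (0 < _); rewrite /r /d1; field; rewrite gt_eqF.
pose p := (s12 * s02 - s22 * s01) / (s22 * d1).
pose q := (s12 * s01 - s11 * s02) / (s22 * d1).
pose d0 := 1 * (s00 * 1 + s01 * p + s02 * q) + p * (s01 * 1 + s11 * p + s12 * q)
           + q * (s02 * 1 + s12 * p + s22 * q).
have d0_gt0 : 0 < d0.
  by have := S_pos 1 p q; rewrite quad_mx3 oner_eq0 => /(_ isT).
exists p, q, r, d0, d1, s22; split=> //.
rewrite /lowtri /S trmx_mx3 !mul_mx3 /d0 /p /q /r.
have s22_ne0 : s22 != 0 by rewrite gt_eqF.
have det_ne0 : s11 * s22 - s12 ^+ 2 != 0.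
  have -> : s11 * s22 - s12 ^+ 2 = s22 * d1 by rewrite /d1; field.
  by rewrite mulf_neq0 // gt_eqF.
by congr mx3; rewrite /d1; field; rewrite ?s22_ne0 ?det_ne0.
Qed.

Lemma orbit_diag (S : 'M[R]_3) : posdef S ->
  exists lam : R, 0 < lam /\ Defs.orbit S (Qdiag lam).
Proof.
move=> [S_sym S_pd].
have S_symE i j : S i j = S j i by rewrite -{1}S_sym mxE.
have S_E : S = mx3 (S o0 o0) (S o0 o1) (S o0 o2) (S o0 o1) (S o1 o1) (S o1 o2)
                   (S o0 o2) (S o1 o2) (S o2 o2).
  by rewrite {1}(mx3_eta S) (S_symE o1 o0) (S_symE o2 o0) (S_symE o2 o1).
move: S_pd; rewrite S_E => /lowtri_congr_diag[p [q [r [d0 [d1 [d2 []]]]]]].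
rewrite -S_E => d0_gt0 d1_gt0 d2_gt0 S_diag.
pose a := (Num.sqrt d0)^-1; pose b := (Num.sqrt d1)^-1.
have a_ne0 : a != 0 by rewrite invr_eq0 gt_eqF // sqrtr_gt0.
have b_ne0 : b != 0 by rewrite invr_eq0 gt_eqF // sqrtr_gt0.
have aa : a * d0 * a = 1.
  by rewrite /a mulrC mulrA -expr2 exprVn sqr_sqrtr ?ltW // mulVf // gt_eqF.
have bb : b * d1 * b = 1.
  by rewrite /b mulrC mulrA -expr2 exprVn sqr_sqrtr ?ltW // mulVf // gt_eqF.
exists (d2 / d1); split; first by rewrite divr_gt0.
exists (lowtri_inv a (p * a) b (q * a) (r * b)); first exact: RxAut_lowtri_inv.
rewrite /act -invmx_lowtri // invmxK.
pose D := mx3 a 0 0 0 b 0 0 0 b.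
have -> : lowtri a (p * a) b (q * a) (r * b) = lowtri 1 p 1 q r *m D.
  by rewrite /lowtri mul_mx3; congr mx3; ring.
have -> : (lowtri 1 p 1 q r *m D)^T *m S *m (lowtri 1 p 1 q r *m D) =
          D^T *m ((lowtri 1 p 1 q r)^T *m S *m lowtri 1 p 1 q r) *m D.
  by rewrite trmx_mul !mulmxA.
rewrite S_diag trmx_mx3 !mul_mx3; congr mx3; try ring.
- by rewrite -[RHS]aa; ring.
- by rewrite -[RHS]bb; ring.
- by rewrite -[d2 / d1]mul1r -bb; field; rewrite gt_eqF.
Qed.

End NormalForm.

Section Calculus.
Variable R : realType.
(* Specialisations to real functions: [apply] with the general lemmas makes
   unification search the normed-module structures of [R] and is very slow. *)
Lemma derivableR_cst (c x : R) : derivable (fun _ : R => c) x 1.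
Proof. exact: derivable_cst. Qed.
Lemma derivableRD (f g : R -> R) (x : R) :
  derivable f x 1 -> derivable g x 1 -> derivable (fun t => f t + g t) x 1.
Proof. exact: derivableD. Qed.
Lemma derivableRB (f g : R -> R) (x : R) :
  derivable f x 1 -> derivable g x 1 -> derivable (fun t => f t - g t) x 1.
Proof. exact: derivableB. Qed.
Lemma derivableRM (f g : R -> R) (x : R) :
  derivable f x 1 -> derivable g x 1 -> derivable (fun t => f t * g t) x 1.
Proof. exact: derivableM. Qed.
Lemma derivableRN (f : R -> R) (x : R) :
  derivable f x 1 -> derivable (fun t => - f t) x 1.
Proof. exact: derivableN. Qed.
Lemma derivableRV (f : R -> R) (x : R) :
  f x != 0 -> derivable f x 1 -> derivable (fun t => (f t)^-1) x 1.
Proof. exact: derivableV. Qed.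

Lemma derivable_eq (f g : R -> R) (x : R) :
  derivable f x 1 -> (forall t, g t = f t) -> derivable g x 1.
Proof. by move=> df /funext ->. Qed.

Lemma derivable_mx3 (f00 f01 f02 f10 f11 f12 f20 f21 f22 : R -> R) (x : R) :
  derivable f00 x 1 -> derivable f01 x 1 -> derivable f02 x 1 ->
  derivable f10 x 1 -> derivable f11 x 1 -> derivable f12 x 1 ->
  derivable f20 x 1 -> derivable f21 x 1 -> derivable f22 x 1 ->
  derivable (fun t => mx3 (f00 t) (f01 t) (f02 t) (f10 t) (f11 t) (f12 t)
                          (f20 t) (f21 t) (f22 t)) x 1.
Proof.
move=> d00 d01 d02 d10 d11 d12 d20 d21 d22; apply/derivable_mxP => i j.
case_ord3 i; case_ord3 j.
- by apply: (derivable_eq d00) => t; rewrite mxE.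
- by apply: (derivable_eq d01) => t; rewrite mxE.
- by apply: (derivable_eq d02) => t; rewrite mxE.
- by apply: (derivable_eq d10) => t; rewrite mxE.
- by apply: (derivable_eq d11) => t; rewrite mxE.
- by apply: (derivable_eq d12) => t; rewrite mxE.
- by apply: (derivable_eq d20) => t; rewrite mxE.
- by apply: (derivable_eq d21) => t; rewrite mxE.
- by apply: (derivable_eq d22) => t; rewrite mxE.
Qed.
Lemma derive1_mx3 (f00 f01 f02 f10 f11 f12 f20 f21 f22 : R -> R) (x : R) :
  derivable f00 x 1 -> derivable f01 x 1 -> derivable f02 x 1 ->
  derivable f10 x 1 -> derivable f11 x 1 -> derivable f12 x 1 ->
  derivable f20 x 1 -> derivable f21 x 1 -> derivable f22 x 1 ->
  derive1 (fun t => mx3 (f00 t) (f01 t) (f02 t) (f10 t) (f11 t) (f12 t)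
                          (f20 t) (f21 t) (f22 t)) x =
  mx3 (derive1 f00 x) (derive1 f01 x) (derive1 f02 x) (derive1 f10 x)
      (derive1 f11 x) (derive1 f12 x) (derive1 f20 x) (derive1 f21 x)
      (derive1 f22 x).
Proof.
move=> d00 d01 d02 d10 d11 d12 d20 d21 d22.
rewrite derive1E derive_mx; last exact: derivable_mx3.
apply/matrixP => i j; rewrite !mxE.
by case_ord3 i; case_ord3 j;
  rewrite /= derive1E; congr ('D_1 _ x); apply/funext => t; rewrite mxE.
Qed.

Lemma derive1D (f g : R -> R) (x : R) : derivable f x 1 -> derivable g x 1 ->
  derive1 (fun t => f t + g t) x = derive1 f x + derive1 g x.
Proof. by move=> df dg; rewrite !derive1E; apply: deriveD. Qed.

Lemma derive1M (f g : R -> R) (x : R) : derivable f x 1 -> derivable g x 1 ->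
  derive1 (fun t => f t * g t) x = f x * derive1 g x + g x * derive1 f x.
Proof. by move=> df dg; rewrite !derive1E; apply: deriveM. Qed.

Lemma derive1Ml (f : R -> R) (k x : R) : derivable f x 1 ->
  derive1 (fun t => k * f t) x = k * derive1 f x.
Proof. by move=> df; rewrite !derive1E; apply: deriveMl. Qed.

Definition twice_derivable (f : R -> R) :=
  (forall t, derivable f t 1) /\ (forall t, derivable (derive1 f) t 1).

Lemma twice_derivable_cst (c : R) : twice_derivable (fun _ => c).
Proof.
split=> t; first exact: derivableR_cst.
rewrite (_ : derive1 _ = fun _ => 0); first exact: derivableR_cst.
by apply/funext => s; exact: derive1_cst.
Qed.

Lemma twice_derivable_poly (p : {poly R}) : twice_derivable (horner p).
Proof. by split=> t; [|rewrite -derivE]; exact: derivable_horner. Qed.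

Lemma twice_derivable_inv_poly (p : {poly R}) :
  (forall t, p.[t] != 0) -> twice_derivable (fun t => p.[t]^-1).
Proof.
move=> p_ne0; split=> t; first by apply: derivableRV => //; exact: derivable_horner.
have -> : derive1 (fun t => p.[t]^-1) = fun s => - (p.[s] * p.[s])^-1 * p^`().[s].
  apply/funext => s; rewrite derive1E deriveV ?p_ne0 //.
  by rewrite -derive1E -derivE expr2.
apply: derivableRM; last exact: derivable_horner.
apply/derivableRN/derivableRV; first by rewrite mulf_neq0.
by apply: derivableRM; exact: derivable_horner.
Qed.

Lemma adm_curve_lowtri (a p b q r : R -> R) :
  twice_derivable a -> twice_derivable p -> twice_derivable b ->
  twice_derivable q -> twice_derivable r ->
  (forall t, a t != 0) -> (forall t, b t != 0) ->
  lowtri (a 0) (p 0) (b 0) (q 0) (r 0) = 1%:M ->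
  adm_curve (fun t => lowtri (a t) (p t) (b t) (q t) (r t)).
Proof.
move=> [da d2a] [dp d2p] [db d2b] [dq d2q] [dr d2r] a_ne0 b_ne0 gam0.
have [z1 z2] := twice_derivable_cst (0 : R).
split; first by move=> t; apply/mem_set/RxAut_lowtri.
split=> //; split=> t; first exact: derivable_mx3.
rewrite (_ : derive1 _ = fun s => lowtri (derive1 a s) (derive1 p s) (derive1 b s)
                                       (derive1 q s) (derive1 r s)).
  exact: derivable_mx3.
by apply/funext => s; rewrite derive1_mx3 // derive1_cst.
Qed.

End Calculus.

Ltac derivable_tac := repeat match goal with
  | |- derivable (fun _ => _ + _) _ _ => apply: derivableRD
  | |- derivable (fun _ => _ - _) _ _ => apply: derivableRB
  | |- derivable (fun _ => _ * _) _ _ => apply: derivableRM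
  | |- derivable (fun _ => - _) _ _ => apply: derivableRN
  | |- derivable (fun _ => ?c) _ _ => exact: derivableR_cst
  | |- _ => assumption
  end.

Section Tangent.
Variable R : realType.

Lemma ocurve_at0 (gam : R -> 'M[R]_3) (Q : 'M[R]_3) :
  adm_curve gam -> ocurve gam Q 0 = Q.
Proof. by case=> _ [gam0 _]; rewrite /ocurve /act gam0 invmx1 trmx1 mul1mx mulmx1. Qed.

Lemma derive1_orbit_defect (lam : R) (kB kR : R -> R) :
  derivable kB 0 1 -> derivable kR 0 1 -> kB 0 = 1 -> kR 0 = 0 ->
  derive1 (fun t => lam * (kB t * kB t)) 0 =
  lam * derive1 (fun t => kB t * kB t + lam * (kR t * kR t)) 0.
Proof.
move=> dkB dkR kB0 kR0.
have dkBB : derivable (fun t => kB t * kB t) 0 1 by apply: derivableRM.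
have dkRR : derivable (fun t => kR t * kR t) 0 1 by apply: derivableRM.
have dlRR : derivable (fun t => lam * (kR t * kR t)) 0 1.
  by apply: derivableRM; [exact: derivableR_cst | exact: dkRR].
have e11 : derive1 (fun t => kB t * kB t + lam * (kR t * kR t)) 0 =
    derive1 (fun t => kB t * kB t) 0 + lam * derive1 (fun t => kR t * kR t) 0.
  by rewrite -(derive1Ml lam dkRR); exact: derive1D dkBB dlRR.
have eRR : derive1 (fun t => kR t * kR t) 0 = 0.
  by rewrite (derive1M dkR dkR) kR0 !mul0r addr0.
by rewrite e11 eRR mulr0 addr0; exact (derive1Ml lam dkBB).
Qed.

(* The entries of [gam t]^-1, as given by [invmx_lowtri]. *)
Lemma derivable_lowtri_inv_entries (gam : R -> 'M[R]_3) :
  (forall i j, derivable (fun t => gam t i j) 0 1) -> gam 0 = 1%:M ->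
  [/\ derivable (fun t => (gam t o0 o0)^-1) 0 1,
      derivable (fun t => - gam t o1 o0 * (gam t o0 o0 * gam t o1 o1)^-1) 0 1,
      derivable (fun t => (gam t o1 o1)^-1) 0 1,
      derivable (fun t => (gam t o1 o0 * gam t o2 o1 - gam t o1 o1 * gam t o2 o0)
                          * (gam t o0 o0 * (gam t o1 o1 * gam t o1 o1))^-1) 0 1 &
      derivable (fun t => - gam t o2 o1 * (gam t o1 o1 * gam t o1 o1)^-1) 0 1].
Proof.
move=> d_entry gam0.
have gam0E i j : gam 0 i j = (1%:M : 'M[R]_3) i j by rewrite gam0.
have a0 : gam 0 o0 o0 = 1 by rewrite gam0E mxE.
have b0 : gam 0 o1 o1 = 1 by rewrite gam0E mxE.
have inv_derivable (f : R -> R) : derivable f 0 1 -> f 0 = 1 ->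
    derivable (fun t => (f t)^-1) 0 1.
  by move=> df f0; apply: derivableRV; rewrite ?f0 ?oner_neq0.
have dAB : derivable (fun t => gam t o0 o0 * gam t o1 o1) 0 1.
  by apply: derivableRM; exact: d_entry.
have dBB : derivable (fun t => gam t o1 o1 * gam t o1 o1) 0 1.
  by apply: derivableRM; exact: d_entry.
have dABB : derivable (fun t => gam t o0 o0 * (gam t o1 o1 * gam t o1 o1)) 0 1.
  by apply: derivableRM; first exact: d_entry.
split.
- exact: inv_derivable _ (d_entry o0 o0) a0.
- apply: derivableRM; first by apply: derivableRN; exact: d_entry.
  by apply: (inv_derivable _ dAB); rewrite /= a0 b0 mulr1.
- exact: inv_derivable _ (d_entry o1 o1) b0.
- apply: derivableRM; first by apply: derivableRB; apply: derivableRM; exact: d_entry.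
  by apply: (inv_derivable _ dABB); rewrite /= a0 b0 !mulr1.
- apply: derivableRM; first by apply: derivableRN; exact: d_entry.
  by apply: (inv_derivable _ dBB); rewrite /= b0 mulr1.
Qed.

(* In the orbit curve [(G t)^T Qdiag (G t)], [G t = gam t^-1 = lowtri kA kP kB kQ kR],
   the (2,2) and (3,3) entries are [kB^2 + lam kR^2] and [lam kB^2], and
   [kB 0 = 1], [kR 0 = 0]. *)
Lemma orbit_tangent_Qdiag (lam : R) (gam : R -> 'M[R]_3) :
  lam != 0 -> adm_curve gam ->
  exists d00 d01 d02 d11 d12 : R,
    derive1 (ocurve gam (Qdiag lam)) 0 =
    mx3 d00 d01 d02 d01 d11 d12 d02 d12 (lam * d11).
Proof.
move=> lam_ne0 [gam_H [gam0 [gam_d _]]].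
have d_entry := proj1 (derivable_mxP gam 0 1) (gam_d 0).
pose kA t := (gam t o0 o0)^-1.
pose kP t := - gam t o1 o0 * (gam t o0 o0 * gam t o1 o1)^-1.
pose kB t := (gam t o1 o1)^-1.
pose kQ t := (gam t o1 o0 * gam t o2 o1 - gam t o1 o1 * gam t o2 o0)
             * (gam t o0 o0 * (gam t o1 o1 * gam t o1 o1))^-1.
pose kR t := - gam t o2 o1 * (gam t o1 o1 * gam t o1 o1)^-1.
have [dkA dkP dkB dkQ dkR] : [/\ derivable kA 0 1, derivable kP 0 1, derivable kB 0 1,
    derivable kQ 0 1 & derivable kR 0 1] := derivable_lowtri_inv_entries d_entry gam0.
have kB0 : kB 0 = 1 by rewrite /kB gam0 mxE invr1.
have kR0 : kR 0 = 0 by rewrite /kR gam0 mxE oppr0 mul0r.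
pose c00 t := kA t * kA t + kP t * kP t + lam * (kQ t * kQ t).
pose c01 t := kP t * kB t + lam * (kQ t * kR t).
pose c02 t := lam * (kQ t * kB t).
pose c11 t := kB t * kB t + lam * (kR t * kR t).
pose c12 t := lam * (kR t * kB t).
pose c22 t := lam * (kB t * kB t).
have -> : ocurve gam (Qdiag lam) =
    fun t => mx3 (c00 t) (c01 t) (c02 t) (c01 t) (c11 t) (c12 t) (c02 t) (c12 t) (c22 t).
  apply/funext => t; have [a_ne0 b_ne0 gamE] := RxAutP (set_mem (gam_H t)).
  rewrite /ocurve gamE /act invmx_lowtri // /lowtri_inv /lowtri /Qdiag trmx_mx3 !mul_mx3.
  rewrite /c00 /c01 /c02 /c11 /c12 /c22 /kA /kP /kB /kQ /kR.
  by congr mx3; field; rewrite ?a_ne0 ?b_ne0.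
have c22' : derive1 c22 0 = lam * derive1 c11 0.
  exact (derive1_orbit_defect lam dkB dkR kB0 kR0).
have dc00 : derivable c00 0 1 by rewrite /c00; derivable_tac.
have dc01 : derivable c01 0 1 by rewrite /c01; derivable_tac.
have dc02 : derivable c02 0 1 by rewrite /c02; derivable_tac.
have dc11 : derivable c11 0 1 by rewrite /c11; derivable_tac.
have dc12 : derivable c12 0 1 by rewrite /c12; derivable_tac.
have dc22 : derivable c22 0 1 by rewrite /c22; derivable_tac.
exists (derive1 c00 0), (derive1 c01 0), (derive1 c02 0), (derive1 c11 0), (derive1 c12 0).
by rewrite (derive1_mx3 dc00 dc01 dc02 dc01 dc11 dc12 dc02 dc12 dc22) c22'.
Qed.

End Tangent.

Definition horner_ringE := (hornerD, hornerN, hornerC, hornerX, hornerZ, hornerXn,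
  hornerM, horner0, hornerMn).
Definition deriv_ringE := (derivD, derivN, derivC, derivX, derivZ, derivXn, derivM, deriv0).

Section Curves.
Variable R : realType.

Definition polmx3 (p00 p01 p02 p10 p11 p12 p20 p21 p22 : {poly R}) (t : R) :=
  mx3 p00.[t] p01.[t] p02.[t] p10.[t] p11.[t] p12.[t] p20.[t] p21.[t] p22.[t].

Lemma derive1_polmx3 p00 p01 p02 p10 p11 p12 p20 p21 p22 :
  derive1 (polmx3 p00 p01 p02 p10 p11 p12 p20 p21 p22) =
  polmx3 p00^`() p01^`() p02^`() p10^`() p11^`() p12^`() p20^`() p21^`() p22^`().
Proof.
apply/funext => t; rewrite /polmx3 derive1_mx3; try exact: derivable_horner.
by rewrite -!derivE.
Qed.

Variable lam : R.
Hypothesis lam_ne0 : lam != 0.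

Lemma invmx_Qdiag : invmx (Qdiag lam) = mx3 1 0 0 0 1 0 0 0 lam^-1.
Proof. by apply: mulmx1_invmx; rewrite /Qdiag mul_mx3 mx3_1; congr mx3; field. Qed.

(* No real root when [k ^+ 2 < 4], so [scale1 k] and [scale23 k] below are
   defined on all of [R]. *)
Definition qpoly (k : R) : {poly R} := 1 + k *: 'X + 'X^2.

Lemma qpoly_neq0 k t : k ^+ 2 < 4 -> (qpoly k).[t] != 0.
Proof.
move=> k2_lt4; rewrite /qpoly !horner_ringE gt_eqF //.
have := sqr_ge0 (2 * t + k); nra.
Qed.

Definition scale1 (k t : R) := lowtri (qpoly k).[t]^-1 0 1 0 0.
Definition scale23 (k t : R) := lowtri 1 0 (qpoly k).[t]^-1 0 0.
Definition shear21 (s t : R) := lowtri 1 (- (s * t)) 1 0 0.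
Definition shear31 (c t : R) := lowtri 1 0 1 (- (c * t)) 0.
Definition shear32 (c t : R) := lowtri 1 0 1 0 (- (c * t)).

Lemma twice_derivable_lin (a : R) : twice_derivable (fun t => - (a * t)).
Proof.
rewrite (_ : (fun t => _) = horner (- (a *: 'X))); first exact: twice_derivable_poly.
by apply/funext => t; rewrite !horner_ringE.
Qed.

Lemma adm_scale1 k : k ^+ 2 < 4 -> adm_curve (scale1 k).
Proof.
move=> k2_lt4; have q_ne0 t := qpoly_neq0 t k2_lt4.
apply: adm_curve_lowtri => [|||||t|t|].
- exact: twice_derivable_inv_poly.
- exact: twice_derivable_cst.
- exact: twice_derivable_cst.
- exact: twice_derivable_cst.
- exact: twice_derivable_cst.
- by rewrite invr_eq0.
- exact: oner_neq0.
- by rewrite mx3_1 /lowtri /qpoly !horner_ringE; congr mx3; field.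
Qed.

Lemma adm_scale23 k : k ^+ 2 < 4 -> adm_curve (scale23 k).
Proof.
move=> k2_lt4; have q_ne0 t := qpoly_neq0 t k2_lt4.
apply: adm_curve_lowtri => [|||||t|t|].
- exact: twice_derivable_cst.
- exact: twice_derivable_cst.
- exact: twice_derivable_inv_poly.
- exact: twice_derivable_cst.
- exact: twice_derivable_cst.
- exact: oner_neq0.
- by rewrite invr_eq0.
- by rewrite mx3_1 /lowtri /qpoly !horner_ringE; congr mx3; field.
Qed.

Lemma adm_unipotent (p q r : R -> R) :
  twice_derivable p -> twice_derivable q -> twice_derivable r ->
  p 0 = 0 -> q 0 = 0 -> r 0 = 0 ->
  adm_curve (fun t => lowtri 1 (p t) 1 (q t) (r t)).
Proof.
move=> dp dq dr p0 q0 r0; apply: adm_curve_lowtri => [|||||_|_|].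
- exact: twice_derivable_cst.
- exact: dp.
- exact: twice_derivable_cst.
- exact: dq.
- exact: dr.
- exact: oner_neq0.
- exact: oner_neq0.
- by rewrite p0 q0 r0 mx3_1.
Qed.

Lemma adm_shear21 s : adm_curve (shear21 s).
Proof.
by apply: (adm_unipotent (twice_derivable_lin s) (twice_derivable_cst 0) (twice_derivable_cst 0));
  rewrite ?mulr0 ?oppr0.
Qed.

Lemma adm_shear31 c : adm_curve (shear31 c).
Proof.
by apply: (adm_unipotent (twice_derivable_cst 0) (twice_derivable_lin c) (twice_derivable_cst 0));
  rewrite ?mulr0 ?oppr0.
Qed.

Lemma adm_shear32 c : adm_curve (shear32 c).
Proof.
by apply: (adm_unipotent (twice_derivable_cst 0) (twice_derivable_cst 0) (twice_derivable_lin c));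
  rewrite ?mulr0 ?oppr0.
Qed.

Lemma ocurve_scale1 k : k ^+ 2 < 4 ->
  ocurve (scale1 k) (Qdiag lam) = polmx3 (qpoly k * qpoly k) 0 0 0 1 0 0 0 lam%:P.
Proof.
move=> k_h; apply/funext => t; have q_ne0 := qpoly_neq0 t k_h.
rewrite /ocurve /act /scale1 invmx_lowtri ?oner_neq0 ?invr_eq0 //.
move: q_ne0; rewrite /lowtri_inv /lowtri /Qdiag trmx_mx3 !mul_mx3 /polmx3 /qpoly !horner_ringE.
by move=> q_ne0; congr mx3; field; rewrite ?q_ne0.
Qed.

Lemma velocity_scale1 k : k ^+ 2 < 4 ->
  derive1 (ocurve (scale1 k) (Qdiag lam)) 0 = mx3 (2 * k) 0 0 0 0 0 0 0 0.
Proof.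
move=> k_h; rewrite ocurve_scale1 // derive1_polmx3 /polmx3 /qpoly.
by congr mx3; rewrite ?deriv_ringE ?horner_ringE; ring.
Qed.

Lemma accel_scale1 k : k ^+ 2 < 4 ->
  cov_accel (ocurve (scale1 k) (Qdiag lam)) 0 = mx3 (4 - 2 * k ^+ 2) 0 0 0 0 0 0 0 0.
Proof.
move=> k_h; rewrite /cov_accel ocurve_at0; last exact: adm_scale1 k_h.
rewrite invmx_Qdiag ocurve_scale1 // !derive1_polmx3 /polmx3 !mul_mx3 opp_mx3 add_mx3 /qpoly.
by congr mx3; rewrite ?deriv_ringE ?horner_ringE; field.
Qed.

Lemma ocurve_scale23 k : k ^+ 2 < 4 ->
  ocurve (scale23 k) (Qdiag lam) =
  polmx3 1 0 0 0 (qpoly k * qpoly k) 0 0 0 (lam *: (qpoly k * qpoly k)).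
Proof.
move=> k_h; apply/funext => t; have q_ne0 := qpoly_neq0 t k_h.
rewrite /ocurve /act /scale23 invmx_lowtri ?oner_neq0 ?invr_eq0 //.
move: q_ne0; rewrite /lowtri_inv /lowtri /Qdiag trmx_mx3 !mul_mx3 /polmx3 /qpoly !horner_ringE.
by move=> q_ne0; congr mx3; field; rewrite ?q_ne0.
Qed.

Lemma velocity_scale23 k : k ^+ 2 < 4 ->
  derive1 (ocurve (scale23 k) (Qdiag lam)) 0 = mx3 0 0 0 0 (2 * k) 0 0 0 (lam * (2 * k)).
Proof.
move=> k_h; rewrite ocurve_scale23 // derive1_polmx3 /polmx3 /qpoly.
by congr mx3; rewrite ?deriv_ringE ?horner_ringE; ring.
Qed.

Lemma accel_scale23 k : k ^+ 2 < 4 ->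
  cov_accel (ocurve (scale23 k) (Qdiag lam)) 0 =
  mx3 0 0 0 0 (4 - 2 * k ^+ 2) 0 0 0 (lam * (4 - 2 * k ^+ 2)).
Proof.
move=> k_h; rewrite /cov_accel ocurve_at0; last exact: adm_scale23 k_h.
rewrite invmx_Qdiag ocurve_scale23 // !derive1_polmx3 /polmx3 !mul_mx3 opp_mx3 add_mx3 /qpoly.
by congr mx3; rewrite ?deriv_ringE ?horner_ringE; field.
Qed.

Lemma ocurve_shear21 s :
  ocurve (shear21 s) (Qdiag lam) =
  polmx3 (1 + (s * s) *: 'X^2) (s *: 'X) 0 (s *: 'X) 1 0 0 0 lam%:P.
Proof.
apply/funext => t; rewrite /ocurve /act /shear21 invmx_lowtri ?oner_neq0 //.
by rewrite /lowtri_inv /lowtri /Qdiag trmx_mx3 !mul_mx3 /polmx3; congr mx3;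
  rewrite ?horner_ringE; field.
Qed.

Lemma velocity_shear21 s :
  derive1 (ocurve (shear21 s) (Qdiag lam)) 0 = mx3 0 s 0 s 0 0 0 0 0.
Proof.
rewrite ocurve_shear21 derive1_polmx3 /polmx3.
by congr mx3; rewrite ?deriv_ringE ?horner_ringE; ring.
Qed.

Lemma accel_shear21 s :
  cov_accel (ocurve (shear21 s) (Qdiag lam)) 0 = mx3 (s * s) 0 0 0 (- (s * s)) 0 0 0 0.
Proof.
rewrite /cov_accel ocurve_at0; last exact: adm_shear21 s.
rewrite invmx_Qdiag ocurve_shear21 !derive1_polmx3 /polmx3 !mul_mx3 opp_mx3 add_mx3.
by congr mx3; rewrite ?deriv_ringE ?horner_ringE; field.
Qed.

Lemma ocurve_shear31 c :
  ocurve (shear31 c) (Qdiag lam) =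
  polmx3 (1 + (lam * c * c) *: 'X^2) 0 ((lam * c) *: 'X) 0 1 0 ((lam * c) *: 'X) 0 lam%:P.
Proof.
apply/funext => t; rewrite /ocurve /act /shear31 invmx_lowtri ?oner_neq0 //.
by rewrite /lowtri_inv /lowtri /Qdiag trmx_mx3 !mul_mx3 /polmx3; congr mx3;
  rewrite ?horner_ringE; field.
Qed.

Lemma velocity_shear31 c :
  derive1 (ocurve (shear31 c) (Qdiag lam)) 0 = mx3 0 0 (lam * c) 0 0 0 (lam * c) 0 0.
Proof.
rewrite ocurve_shear31 derive1_polmx3 /polmx3.
by congr mx3; rewrite ?deriv_ringE ?horner_ringE; ring.
Qed.

Lemma accel_shear31 c :
  cov_accel (ocurve (shear31 c) (Qdiag lam)) 0 =
  mx3 (lam * c * c) 0 0 0 0 0 0 0 (- (lam * lam * c * c)).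
Proof.
rewrite /cov_accel ocurve_at0; last exact: adm_shear31 c.
rewrite invmx_Qdiag ocurve_shear31 !derive1_polmx3 /polmx3 !mul_mx3 opp_mx3 add_mx3.
by congr mx3; rewrite ?deriv_ringE ?horner_ringE; field.
Qed.

Lemma ocurve_shear32 c :
  ocurve (shear32 c) (Qdiag lam) =
  polmx3 1 0 0 0 (1 + (lam * c * c) *: 'X^2) ((lam * c) *: 'X) 0 ((lam * c) *: 'X) lam%:P.
Proof.
apply/funext => t; rewrite /ocurve /act /shear32 invmx_lowtri ?oner_neq0 //.
by rewrite /lowtri_inv /lowtri /Qdiag trmx_mx3 !mul_mx3 /polmx3; congr mx3;
  rewrite ?horner_ringE; field.
Qed.

Lemma velocity_shear32 c :
  derive1 (ocurve (shear32 c) (Qdiag lam)) 0 = mx3 0 0 0 0 0 (lam * c) 0 (lam * c) 0.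
Proof.
rewrite ocurve_shear32 derive1_polmx3 /polmx3.
by congr mx3; rewrite ?deriv_ringE ?horner_ringE; ring.
Qed.

Lemma accel_shear32 c :
  cov_accel (ocurve (shear32 c) (Qdiag lam)) 0 =
  mx3 0 0 0 0 (lam * c * c) 0 0 0 (- (lam * lam * c * c)).
Proof.
rewrite /cov_accel ocurve_at0; last exact: adm_shear32 c.
rewrite invmx_Qdiag ocurve_shear32 !derive1_polmx3 /polmx3 !mul_mx3 opp_mx3 add_mx3.
by congr mx3; rewrite ?deriv_ringE ?horner_ringE; field.
Qed.

End Curves.

Section MeanCurvature.
Variable R : realType.

(* The linear form [X |-> X_33 - lam X_22] of the header, with 0-based indices. *)
Definition normal_defect (lam : R) (M : 'M[R]_3) : R := M o2 o2 - lam * M o1 o1.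

Lemma normal_defectB lam (A B : 'M[R]_3) :
  normal_defect lam (A - B) = normal_defect lam A - normal_defect lam B.
Proof. by rewrite /normal_defect !mxE; ring. Qed.

Lemma normal_defect_comb lam k (a : 'I_k -> R) (v : 'I_k -> 'M[R]_3) :
  (forall i, normal_defect lam (v i) = 0) ->
  normal_defect lam (\sum_(i < k) a i *: v i) = 0.
Proof.
move=> v_tan; rewrite /normal_defect !summxE mulr_sumr -sumrB.
apply: big1 => i _; rewrite !mxE mulrCA -mulrBr.
by move: (v_tan i); rewrite /normal_defect => ->; rewrite mulr0.
Qed.

Lemma normal_defect_mean_curv lam (Q : 'M[R]_3) k (gam : 'I_k -> R -> 'M[R]_3) :
  (forall i, normal_defect lam (derive1 (ocurve (gam i) Q) 0) = 0) ->
  normal_defect lam (mean_curv Q gam) =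
  normal_defect lam (\sum_(i < k) cov_accel (ocurve (gam i) Q) 0).
Proof.
by move=> tangent; rewrite /mean_curv /= normal_defectB normal_defect_comb // subr0.
Qed.

End MeanCurvature.

Section Frame.
Variable R : realType.
Variables (lam s k c : R).
(* These values make the five velocities orthonormal for [metric (Qdiag lam)]. *)
Hypotheses (lam_ne0 : lam != 0) (s2 : s ^+ 2 = 2) (k2 : k ^+ 2 = 2^-1)
  (c2 : c ^+ 2 = 2 / lam).

Let k2_lt4 : k ^+ 2 < 4. Proof. by rewrite k2; lra. Qed.
Let one2_lt4 : 1 ^+ 2 < 4 :> R. Proof. by rewrite expr1n; lra. Qed.

Let s_ne0 : s != 0.
Proof. by apply/eqP => s0; move: s2; rewrite s0 expr2 mulr0 => /eqP; rewrite eq_sym pnatr_eq0.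
Qed.
Let k_ne0 : k != 0.
Proof.
by apply/eqP => k0; move: k2; rewrite k0 expr2 mulr0 => /eqP; rewrite eq_sym invr_eq0 pnatr_eq0.
Qed.
Let c_ne0 : c != 0.
Proof.
apply/eqP => c0; move: c2; rewrite c0 expr2 mulr0 => /eqP.
by rewrite eq_sym mulf_eq0 invr_eq0 (negbTE lam_ne0) orbF pnatr_eq0.
Qed.

Lemma metric_Qdiag a00 a01 a02 a10 a11 a12 a20 a21 a22
                   b00 b01 b02 b10 b11 b12 b20 b21 b22 :
  metric (Qdiag lam) (mx3 a00 a01 a02 a10 a11 a12 a20 a21 a22)
                     (mx3 b00 b01 b02 b10 b11 b12 b20 b21 b22) =
  4^-1 * (a00 * b00 + a01 * b10 + a02 * b20 / lam + a10 * b01 + a11 * b11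
          + a12 * b21 / lam + a20 * b02 / lam + a21 * b12 / lam
          + a22 * b22 / (lam * lam)).
Proof. by rewrite /metric invmx_Qdiag // !mul_mx3 mxtrace_mx3; field. Qed.

Definition frame (i : 'I_5) : R -> 'M[R]_3 :=
  match val i with
  | 0 => scale1 1 | 1 => scale23 k | 2 => shear21 s | 3 => shear31 c | _ => shear32 c
  end.

Definition frame_velocity (i : 'I_5) : 'M[R]_3 :=
  match val i with
  | 0 => mx3 (2 * 1) 0 0 0 0 0 0 0 0
  | 1 => mx3 0 0 0 0 (2 * k) 0 0 0 (lam * (2 * k))
  | 2 => mx3 0 s 0 s 0 0 0 0 0
  | 3 => mx3 0 0 (lam * c) 0 0 0 (lam * c) 0 0
  | _ => mx3 0 0 0 0 0 (lam * c) 0 (lam * c) 0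
  end.

Definition frame_accel (i : 'I_5) : 'M[R]_3 :=
  match val i with
  | 0 => mx3 (4 - 2 * 1 ^+ 2) 0 0 0 0 0 0 0 0
  | 1 => mx3 0 0 0 0 (4 - 2 * k ^+ 2) 0 0 0 (lam * (4 - 2 * k ^+ 2))
  | 2 => mx3 (s * s) 0 0 0 (- (s * s)) 0 0 0 0
  | 3 => mx3 (lam * c * c) 0 0 0 0 0 0 0 (- (lam * lam * c * c))
  | _ => mx3 0 0 0 0 (lam * c * c) 0 0 0 (- (lam * lam * c * c))
  end.

Lemma velocity_frame i :
  derive1 (ocurve (frame i) (Qdiag lam)) 0 = frame_velocity i.
Proof.
case: i => [[|[|[|[|[|n]]]]] lt_i5] //.
- exact: velocity_scale1.
- exact: velocity_scale23.
- exact: velocity_shear21.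
- exact: velocity_shear31.
- exact: velocity_shear32.
Qed.

Lemma accel_frame i :
  cov_accel (ocurve (frame i) (Qdiag lam)) 0 = frame_accel i.
Proof.
case: i => [[|[|[|[|[|n]]]]] lt_i5] //.
- exact: accel_scale1.
- exact: accel_scale23.
- exact: accel_shear21.
- exact: accel_shear31.
- exact: accel_shear32.
Qed.

Lemma adm_frame i : adm_curve (frame i).
Proof.
case: i => [[|[|[|[|[|n]]]]] lt_i5] //.
- exact: adm_scale1.
- exact: adm_scale23.
- exact: adm_shear21.
- exact: adm_shear31.
- exact: adm_shear32.
Qed.

Lemma normal_defect_frame_velocity i : normal_defect lam (frame_velocity i) = 0.
Proof.
by case: i => [[|[|[|[|[|n]]]]] lt_i5] //; rewrite /normal_defect /frame_velocity !mxE /=; ring.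
Qed.

Lemma normal_defect_frame_accel :
  normal_defect lam (\sum_(i < 5) frame_accel i) = - 4 * lam.
Proof.
rewrite /normal_defect !summxE !big_ord_recl !big_ord0 /frame_accel /= !mxE /=.
rewrite -!mulrA -[c * c]expr2 -[s * s]expr2 c2 s2.
by field.
Qed.

Lemma onb_frame : onb_curves (Qdiag lam) frame.
Proof.
split; first exact: adm_frame.
split=> [i j|v [gam [gam_adm ->]]].
  rewrite !velocity_frame.
  case: i => [[|[|[|[|[|n]]]]] lt_i5] //; case: j => [[|[|[|[|[|m]]]]] lt_j5] //;
    rewrite -val_eqE /frame_velocity /= metric_Qdiag; try by field.
  - by apply: (@etrans _ _ (2 * k ^+ 2)); [field | rewrite k2; field].
  - by apply: (@etrans _ _ (s ^+ 2 / 2)); [field | rewrite s2; field].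
  - by apply: (@etrans _ _ (lam * c ^+ 2 / 2)); [field | rewrite c2; field].
  - by apply: (@etrans _ _ (lam * c ^+ 2 / 2)); [field | rewrite c2; field].
have [d00 [d01 [d02 [d11 [d12 ->]]]]] := orbit_tangent_Qdiag lam_ne0 gam_adm.
exists (fun i : 'I_5 => match val i with
  | 0 => d00 / 2 | 1 => d11 / (2 * k) | 2 => d01 / s | 3 => d02 / (lam * c)
  | _ => d12 / (lam * c) end).
under eq_bigr => i _ do rewrite velocity_frame.
rewrite !big_ord_recl big_ord0 addr0 /frame_velocity /= !scale_mx3 !add_mx3.
by congr mx3; field; rewrite ?s_ne0 ?k_ne0 ?c_ne0 ?lam_ne0.
Qed.

End Frame.

Lemma frame_constants (R : realType) (lam : R) : 0 < lam ->
  exists s k c : R, [/\ s ^+ 2 = 2, k ^+ 2 = 2^-1 & c ^+ 2 = 2 / lam].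
Proof.
move=> lam_gt0; exists (Num.sqrt 2), (Num.sqrt 2^-1), (Num.sqrt (2 / lam)).
by rewrite !sqr_sqrtr // ?invr_ge0 ?divr_ge0 ?ler0n // ltW.
Qed.

Theorem proposition5p2 (R : realType) :
  forall S : 'M[R]_3, posdef S -> ~ minimal_orbit S.
Proof.
move=> S S_pd S_min.
have [lam [lam_gt0 S_lam]] := orbit_diag S_pd.
have lam_ne0 : lam != 0 by rewrite gt_eqF.
have [s [k [c [s2 k2 c2]]]] := frame_constants lam_gt0.
have /(congr1 (normal_defect lam)) := S_min _ S_lam _ _ (onb_frame lam_ne0 s2 k2 c2).
rewrite normal_defect_mean_curv => [|i]; last first.
  by rewrite velocity_frame // normal_defect_frame_velocity.
rewrite (eq_bigr _ (fun i _ => @accel_frame R lam s k c lam_ne0 k2 i)).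
rewrite normal_defect_frame_accel // /normal_defect !mxE.
lra.
Qed.
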